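(* Let $p$ be a prime and let $\theta\in\mathbb{F}_p((X^{-1}))$ be a counterexample to the $X$-adic Littlewood conjecture over $\mathbb{F}_p$ with finite deficiency $D(\theta)\in\mathbb{N}_0$, i.e. for every $r\ge0$ all partial quotients $A^{(r)}_j$ of the simple continued fraction expansion of $\langle X^r\theta\rangle$ satisfy $\deg(A^{(r)}_j)\le D(\theta)+1$. Then for every $m>D(\theta)$ the digital $(D(\theta),m,3)$-net $(\boldsymbol{x}_n)_{0\le n<p^m}$ over $\mathbb{F}_p$ generated by $I^{(m)}$, $H^{(m)}(\theta)$ and $J^{(m)}$ is $(D(\theta)+3)$-admissible, i.e. $$\min_{0\le k<n<p^m}\|\boldsymbol{x}_k\ominus\boldsymbol{x}_n\|_p>p^{-m-D(\theta)-3}.$$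
   Context: $\mathbb{F}_p((X^{-1}))$ is the field of formal Laurent series $\theta=\sum_{i=j}^\infty a_iX^{-i}$ over $\mathbb{F}_p$, with $|\theta|=2^{-j}$ for $a_j\ne0$, fractional part $\langle\theta\rangle=\sum_{i\ge\max\{1,j\}}a_iX^{-i}$, $\|\theta\|=|\langle\theta\rangle|$; $\theta$ is a counterexample to the $X$-adic Littlewood conjecture if $\inf_{r\ge0,Q\in\mathbb{F}_p[X]\setminus\{0\}}|Q|\cdot\|X^rQ\theta\|>0$. Matrices (rows indexed by $1,2,\dots$, columns by $0,\dots,m-1$): $I^{(m)}$ has entry $1$ in row $k$, column $k-1$, else $0$; $H^{(m)}(\theta)$ has entry $a_{k+l}$ in row $k$, column $l$ (with $a_i=0$ for $1\le i<j$); $J^{(m)}$ has entry $1$ in row $k$, column $m-k$ for $1\le k\le m$, else $0$. Point set: for $0\le n<p^m$ with base-$p$ digit vector $\vec n=(n_0,\dots,n_{m-1})^T$, $C_i\vec n=(y^{(i)}_1,y^{(i)}_2,\dots)^T$ mod $p$ ($C_1=I^{(m)},C_2=H^{(m)}(\theta),C_3=J^{(m)}$), $x^{(i)}_n=\sum_k y^{(i)}_kp^{-k}$, $\boldsymbol{x}_n=(x^{(1)}_n,x^{(2)}_n,x^{(3)}_n)$. For $\boldsymbol{x}=(x^{(1)},x^{(2)},x^{(3)})$ with digit expansions $x^{(i)}=\sum_{j\ge1}x^{(i)}_jp^{-j}$, $\|\boldsymbol{x}\|_p=p^{-l}$ with $l=\sum_{i=1}^3\min\{j\in\mathbb{N}:x^{(i)}_j\neq0\}$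 (minimum of the empty set being $\infty$, so $\|\boldsymbol{x}\|_p=0$ if some coordinate is $0$). $\ominus$ is componentwise digit-wise subtraction modulo $p$: $x^{(i)}_k\ominus x^{(i)}_n=\sum_{j\ge1}\big((x^{(i)}_{k,j}-x^{(i)}_{n,j})\bmod p\big)p^{-j}$. *)

From mathcomp Require Import all_boot all_order all_algebra.
From Stdlib Require Import ClassicalEpsilon.
Set Implicit Arguments. Unset Strict Implicit. Unset Printing Implicit Defensive.
Import Order.TTheory GRing.Theory Num.Theory.
Local Open Scope ring_scope.

Definition first_nz (T : nmodType) (a : nat -> T) : option nat :=
  match excluded_middle_informative (exists n, a n != 0) with
  | left h => Some (@ex_minn (fun n => a n != 0) h)
  | right _ => None
  end.

(* ---------- Laurent series in X^{-1} over 'F_p ----------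
   A fractional part  sum_{i>=1} a_i X^{-i}  is represented by f : nat -> 'F_p
   with f i = a_{i+1}  (coefficient of X^{-(i+1)}).  *)

Definition frac_abs (p : nat) (g : nat -> 'F_p) : rat :=
  match first_nz g with
  | Some v => ((2 ^ v.+1)%N%:R)^-1
  | None => 0
  end.

(* fractional part of X^r Q theta, where f is the fractional part of theta:
   coefficient of X^{-(i+1)} is sum_d Q_d a_{i+1+r+d} *)
Definition frac_XrQ (p : nat) (f : nat -> 'F_p) (r : nat) (Q : {poly 'F_p}) : nat -> 'F_p :=
  fun i => \sum_(d < size Q) Q`_d * f (i + r + d)%N.

Definition poly_abs (p : nat) (Q : {poly 'F_p}) : rat := (2 ^ (size Q).-1)%N%:R.

Definition XadicLC_counterexample (p : nat) (f : nat -> 'F_p) : Prop :=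
  exists c : rat, 0 < c /\
    forall (r : nat) (Q : {poly 'F_p}), Q != 0 ->
      c <= poly_abs Q * frac_abs (frac_XrQ f r Q).

(* inv_step al A al' : for the (nonzero) fractional series al, the Laurent series
   A + al' (A polynomial part, al' fractional part) is the inverse of al,
   i.e. al * (A + al') = 1 coefficientwise:
   - coefficient of X^n (n >= 0):        sum_d A_d al_{d-n-1}                 = [n = 0]
   - coefficient of X^{-(s+1)} (s >= 0): sum_d A_d al_{d+s} + sum_{i+j=s-1} al_i al'_j = 0 *)
Definition inv_step (p : nat) (al : nat -> 'F_p) (A : {poly 'F_p}) (al' : nat -> 'F_p)
  : Prop :=
  (forall n : nat,
      \sum_(d < size A | (n < d)%N) A`_d * al (d - n.+1)%N = (n == 0%N)%:R) /\
  (forall s : nat,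
      \sum_(d < size A) A`_d * al (d + s)%N
      + \sum_(i < s) al i * al' (s.-1 - i)%N = 0).

(* Continued fraction algorithm started at al0 (|al0| < 1):
   alpha_0 = al0, and while alpha_j <> 0:
   A_{j+1} = [1/alpha_j] (polynomial part), alpha_{j+1} = <1/alpha_j>. *)
Definition cf_expansion (p : nat) (al0 : nat -> 'F_p)
  (al : nat -> nat -> 'F_p) (A : nat -> {poly 'F_p}) : Prop :=
  (forall i, al 0%N i = al0 i) /\
  forall j, (exists i, al j i != 0) -> inv_step (al j) (A j.+1) (al j.+1).

(* Finite deficiency bound D: for every r >= 0, every partial quotient A_j (j >= 1)
   of the continued fraction expansion of <X^r theta> has degree <= D + 1.
   <X^r theta> has fractional coefficients i |-> f (i + r). *)
Definition deficiency_bound (p : nat) (f : nat -> 'F_p) (D : nat) : Prop :=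
  forall (r : nat) (al : nat -> nat -> 'F_p) (A : nat -> {poly 'F_p}),
    cf_expansion (fun i => f (i + r)%N) al A ->
    forall j : nat, (forall i, (i <= j)%N -> exists t, al i t != 0) ->
      ((size (A j.+1)).-1 <= D.+1)%N.

(* ---------- the digital net ----------
   Generating matrices: rows indexed by k = 1,2,... (row 0 unused, set to 0),
   columns by 'I_m. *)
Definition Imat (p m : nat) : nat -> 'I_m -> 'F_p :=
  fun k l => ((k == (val l).+1) : nat)%:R.
(* H^{(m)}(theta): entry a_{k+l} = f (k - 1 + l) in row k >= 1, column l *)
Definition Hmat (p m : nat) (f : nat -> 'F_p) : nat -> 'I_m -> 'F_p :=
  fun k l => if k is k'.+1 then f (k' + val l)%N else 0.
Definition Jmat (p m : nat) : nat -> 'I_m -> 'F_p :=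
  fun k l => (((0 < k <= m)%N && (val l == m - k)%N) : nat)%:R.

Definition ndigit (p n l : nat) : 'F_p := ((n %/ p ^ l) %% p)%N%:R.

(* digits y_1, y_2, ... (index k >= 1) of x_n = sum_k y_k p^{-k}, (y_k) = C n mod p *)
Definition net_digits (p m : nat) (C : nat -> 'I_m -> 'F_p) (n : nat) : nat -> 'F_p :=
  fun k => \sum_(l < m) C k l * ndigit p n l.

Definition dsub (p : nat) (x y : nat -> 'F_p) : nat -> 'F_p := fun k => x k - y k.

Definition dmin (p : nat) (x : nat -> 'F_p) : option nat :=
  omap S (first_nz (fun j => x j.+1)).

Definition pnorm3 (p : nat) (x1 x2 x3 : nat -> 'F_p) : rat :=
  match dmin x1, dmin x2, dmin x3 with
  | Some l1, Some l2, Some l3 => ((p ^ (l1 + l2 + l3))%N%:R)^-1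
  | _, _, _ => 0
  end.

Definition net_dist (p m : nat) (f : nat -> 'F_p) (k n : nat) : rat :=
  pnorm3 (dsub (net_digits (@Imat p m) k) (net_digits (@Imat p m) n))
         (dsub (net_digits (@Hmat p m f) k) (net_digits (@Hmat p m f) n))
         (dsub (net_digits (@Jmat p m) k) (net_digits (@Jmat p m) n)).

(* Let P be the polynomial of base-p digit differences of k and n, a the index
   of its lowest nonzero coefficient and Q = P / X^a.  The first and third
   coordinates of x_k (-) x_n start at digits a + 1 and m - deg P, and the second
   one is <X^a Q theta>, which starts at some digit w + 1 because theta is a
   counterexample to the X-adic Littlewood conjecture.  The deficiency bound gives
   w <= deg Q + D: one step of the continued fraction expansion of
   alpha = <X^a theta> replaces Q by [Q alpha] and <Q alpha> by -<Q alpha>/alpha,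
   lowering both deg Q and w by the degree of the partial quotient, which is at
   most D + 1, until w drops below that degree.  So the three exponents add up
   to at most m + D + 2. *)

From mathcomp Require Import all_boot all_order all_algebra.
From mathcomp Require Import zify.
From Stdlib Require Import ClassicalEpsilon.
Import Order.TTheory GRing.Theory Num.Theory.
Local Open Scope ring_scope.

Set Implicit Arguments. Unset Strict Implicit. Unset Printing Implicit Defensive.

Section FirstNonzero.
Variable V : nmodType.
Implicit Types a b : nat -> V.

Lemma first_nz_SomeP a v :
  first_nz a = Some v <-> a v != 0 /\ (forall i, (i < v)%N -> a i = 0).
Proof.
rewrite /first_nz; case: excluded_middle_informative => [ex|nex]; last first.
  by split=> // -[av _]; case: nex; exists v.
case: ex_minnP => u au u_min; split=> [[<-]|[av v_min]].
  by split=> // i iu; apply/eqP; apply: contraTT iu => /u_min; rewrite -leqNgt.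
congr Some; apply/eqP; rewrite eqn_leq u_min // leqNgt.
by apply/negP => /v_min/eqP; rewrite (negbTE au).
Qed.

Lemma first_nz_NoneP a : first_nz a = None <-> forall i, a i = 0.
Proof.
rewrite /first_nz; case: excluded_middle_informative => [[i ai]|nex]; split=> //.
- by move/(_ i)/eqP; rewrite (negbTE ai).
- by move=> _ i; apply/eqP; apply: contra_notT nex; exists i.
Qed.

Lemma eq_first_nz a b : a =1 b -> first_nz a = first_nz b.
Proof.
move=> eq_ab; case Ea: (first_nz a) => [v|]; last first.
  by symmetry; apply first_nz_NoneP => i; rewrite -eq_ab; apply first_nz_NoneP.
have [av v_min] := proj1 (first_nz_SomeP a v) Ea.
by symmetry; apply first_nz_SomeP; split=> [|i /v_min]; rewrite -eq_ab.
Qed.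

End FirstNonzero.

Section SeriesInverse.
Variable F : fieldType.
Implicit Types u : nat -> F.

Fixpoint series_inv_seq u n : seq F :=
  if n is n'.+1 then
    let s := series_inv_seq u n' in
    rcons s (if n' is 0 then (u 0%N)^-1
             else - (u 0%N)^-1 * \sum_(i < n') u i.+1 * nth 0 s (n' - i.+1))
  else [::].

Definition series_inv u n := nth 0 (series_inv_seq u n.+1) n.

Lemma size_series_inv_seq u n : size (series_inv_seq u n) = n.
Proof. by elim: n => //= n IHn; rewrite size_rcons IHn. Qed.

Lemma nth_series_inv_seq u n i :
  (i < n)%N -> nth 0 (series_inv_seq u n) i = series_inv u i.
Proof.
elim: n => // n IHn; rewrite ltnS leq_eqVlt => /orP[/eqP -> //|lt_in].
by rewrite /= nth_rcons size_series_inv_seq lt_in IHn.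
Qed.

Lemma series_invS u n :
  series_inv u n.+1 = - (u 0%N)^-1 * \sum_(i < n.+1) u i.+1 * series_inv u (n - i).
Proof.
rewrite /series_inv; set s := series_inv_seq u n.+1.
have -> : series_inv_seq u n.+2 =
  rcons s (- (u 0%N)^-1 * \sum_(i < n.+1) u i.+1 * nth 0 s (n.+1 - i.+1)) by [].
rewrite nth_rcons size_series_inv_seq ltnn eqxx; congr (_ * _); apply: eq_bigr => i _.
by rewrite /s subSS nth_series_inv_seq // ltnS leq_subr.
Qed.

Lemma mul_series_inv u n : u 0%N != 0 ->
  \sum_(i < n.+1) u i * series_inv u (n - i) = (n == 0%N)%:R.
Proof.
move=> u0; case: n => [|n]; first by rewrite big_ord1 subn0 /series_inv /= divff.
rewrite big_ord_recl subn0 series_invS mulrA mulrN mulfV // mulN1r.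
rewrite [X in _ + X](eq_bigr (fun i : 'I_n.+1 => u i.+1 * series_inv u (n - i))).
  by rewrite addNr.
by move=> i _; rewrite /bump /= ?add1n ?subSS.
Qed.

End SeriesInverse.

Lemma sum_ord_split (V : nmodType) (G : nat -> V) M N K : M = (N + K)%N ->
  \sum_(i < M) G i = \sum_(i < N) G i + \sum_(i < K) G (N + i)%N.
Proof. by move->; rewrite big_split_ord. Qed.

Lemma sum_ord_gtn (V : nmodType) (G : nat -> V) n M : (n < M)%N ->
  \sum_(i < M | (n < i)%N) G i = \sum_(i < M - n.+1) G (n.+1 + i)%N.
Proof.
move=> nM; rewrite big_mkcond.
rewrite (@sum_ord_split _ (fun i => if (n < i)%N then G i else 0) M n.+1 (M - n.+1));
  last by lia.
rewrite big1 ?add0r => [|i _]; last by rewrite ltnNge -ltnS ltn_ord.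
by apply: eq_bigr => i _; rewrite leq_addr.
Qed.

Section ContinuedFractionStep.
Variable F : fieldType.
Implicit Types (a : nat -> F) (Q : {poly F}).

Definition nonzero a := exists i, a i != 0.

(* A map a : nat -> F stands for the series alpha = \sum_i a i X^(-i-1), so that
   |alpha| = 2^-(frac_ord a + 1).  With v := frac_ord a, 1/alpha is
   X^(v+1) * \sum_i cf_inv a i X^(-i), whose polynomial and fractional parts
   are cf_quot a and cf_next a. *)
Definition frac_ord a := odflt 0%N (first_nz a).

Definition cf_inv a := series_inv (fun i => a (frac_ord a + i)%N).

Definition cf_quot a : {poly F} :=
  \poly_(d < (frac_ord a).+2) cf_inv a ((frac_ord a).+1 - d).

Definition cf_next a : nat -> F := fun j => cf_inv a ((frac_ord a).+2 + j)%N.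

Lemma frac_ordP a : nonzero a ->
  a (frac_ord a) != 0 /\ (forall i, (i < frac_ord a)%N -> a i = 0).
Proof.
move=> [i ai]; rewrite /frac_ord; case E: (first_nz a) => [v|] /=.
  exact: (proj1 (first_nz_SomeP a v) E).
by move: ai; rewrite (proj1 (first_nz_NoneP a) E) eqxx.
Qed.

Lemma cf_inv0_neq0 a : nonzero a -> cf_inv a 0 != 0.
Proof. by case/frac_ordP => a_v _; rewrite /cf_inv /series_inv /= invr_neq0 ?addn0. Qed.

Lemma size_cf_quot a : nonzero a -> size (cf_quot a) = (frac_ord a).+2.
Proof. by move=> nz_a; rewrite size_poly_eq //= subnn cf_inv0_neq0. Qed.

Lemma cf_inv_conv a M : nonzero a ->
  \sum_(i < M.+1) a i * cf_inv a (M - i) = (M == frac_ord a)%:R.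
Proof.
move=> nz_a; have [a_v a_lt] := frac_ordP nz_a; set v := frac_ord a in a_v a_lt *.
have [Mv|vM] := ltnP M v.
  by rewrite (ltn_eqF Mv) big1 // => i _; rewrite a_lt ?mul0r //; have := ltn_ord i; lia.
rewrite (@sum_ord_split _ (fun i => a i * cf_inv a (M - i)) M.+1 v (M - v).+1);
  last by lia.
rewrite big1 ?add0r => [|i _]; last by rewrite a_lt ?mul0r.
have -> : (M == v) = (M - v == 0)%N by lia.
rewrite -(@mul_series_inv _ (fun i => a (v + i)%N)) ?addn0 //.
by apply: eq_bigr => i _; rewrite /cf_inv subnDA.
Qed.

Definition frac_mul Q a : nat -> F := fun s => \sum_(d < size Q) Q`_d * a (s + d)%N.

Definition polypart_mul Q a : {poly F} :=
  \poly_(n < size Q) \sum_(d < size Q | (n < d)%N) Q`_d * a (d - n.+1)%N.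

Lemma frac_mul_widen Q a s N : (size Q <= N)%N ->
  frac_mul Q a s = \sum_(d < N) Q`_d * a (s + d)%N.
Proof.
move=> sQN; rewrite /frac_mul (big_ord_widen N (fun d => Q`_d * a (s + d)%N)) //.
rewrite big_mkcond; apply: eq_bigr => d _; case: ltnP => // Qd.
by rewrite nth_default ?mul0r.
Qed.

Lemma frac_mul_neq0 Q a s : frac_mul Q a s != 0 -> nonzero a /\ (0 < size Q)%N.
Proof.
move=> Qa_s; split.
  case: (pickP (fun d : 'I_(size Q) => a (s + d)%N != 0)) => [d ad|a0].
    by exists (s + d)%N.
  move: Qa_s; rewrite /frac_mul big1 ?eqxx // => d _.
  by move/negbFE: (a0 d) => /eqP->; rewrite mulr0.
rewrite lt0n; apply: contraNneq Qa_s => sQ0.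
by apply/eqP; apply: big1 => -[d] /=; rewrite sQ0.
Qed.

Lemma frac_mul_drop Q a n : (forall i, (i < n)%N -> Q`_i = 0) ->
  frac_mul Q a =1 frac_mul (drop_poly n Q) (fun i => a (i + n)%N).
Proof.
move=> Q_lt s; rewrite (@frac_mul_widen Q _ _ (n + size Q)) ?leq_addl //.
rewrite (@frac_mul_widen _ _ _ (size Q)) ?size_drop_poly ?leq_subr //.
rewrite (@sum_ord_split _ (fun d => Q`_d * a (s + d)%N) _ n (size Q)) //.
rewrite big1 ?add0r => [|d _]; last by rewrite Q_lt ?mul0r.
by apply: eq_bigr => d _; rewrite coef_drop_poly addnC addnA.
Qed.

Lemma cf_inv_conv_split a d T : nonzero a -> (frac_ord a < T)%N ->
  \sum_(n < d) a (d - n.+1)%N * cf_inv a (T.+1 + n)%N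
  + \sum_(t < T.+1) a (t + d)%N * cf_inv a (T - t)%N = 0.
Proof.
move=> nz_a vT; have := cf_inv_conv (d + T) nz_a.
rewrite (_ : (d + T == frac_ord a) = false); last by lia.
rewrite (@sum_ord_split _ (fun i => a i * cf_inv a (d + T - i)) (d + T).+1 d T.+1);
  last by rewrite addnS.
rewrite mulr0n => sum0; apply: (etrans _ sum0); congr (_ + _).
  rewrite (reindex_inj rev_ord_inj) /=; apply: eq_bigr => i _.
  by congr (a _ * cf_inv a _); have := ltn_ord i; lia.
by apply: eq_bigr => i _; rewrite addnC; congr (_ * cf_inv a _); lia.
Qed.

(* Write alpha' for the series cf_next a.  Comparing fractional parts in
   Q = ([Q alpha] + <Q alpha>) (cf_quot a + alpha') shows that [Q alpha] alpha'
   has the fractional part of -<Q alpha> / alpha. *)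
Lemma frac_mul_polypart_mul_next Q a s : nonzero a ->
  frac_mul (polypart_mul Q a) (cf_next a) s =
  - \sum_(t < (s + frac_ord a).+2) frac_mul Q a t * cf_inv a ((s + frac_ord a).+1 - t).
Proof.
move=> nz_a; set v := frac_ord a; set T := (s + v).+1; set N := size Q.
rewrite (@frac_mul_widen (polypart_mul Q a) _ _ N) ?size_poly //.
under eq_bigr => n _ do rewrite coef_poly ltn_ord mulr_suml.
rewrite (exchange_big_dep xpredT) //= /frac_mul.
under [in RHS]eq_bigr => t _ do rewrite mulr_suml.
rewrite [in RHS]exchange_big /= -sumrN; apply: eq_bigr => d _.
rewrite -(big_ord_widen N (fun n => Q`_d * a (d - n.+1)%N * cf_next a (s + n)%N));
  last exact: ltnW.
rewrite -!(eq_bigr _ (fun i _ => mulrA _ _ _)) -!mulr_sumr -mulrN; congr (_ * _).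
have -> : \sum_(n < d) a (d - n.+1)%N * cf_next a (s + n)%N =
          \sum_(n < d) a (d - n.+1)%N * cf_inv a (T.+1 + n)%N.
  by apply: eq_bigr => n _; rewrite /cf_next; congr (_ * cf_inv a _); rewrite /T /v; lia.
by apply/eqP; rewrite -addr_eq0 cf_inv_conv_split // /T; lia.
Qed.

Lemma first_nz_frac_mul_next Q a w : nonzero a -> (frac_ord a < w)%N ->
  first_nz (frac_mul Q a) = Some w ->
  first_nz (frac_mul (polypart_mul Q a) (cf_next a)) = Some (w - (frac_ord a).+1)%N.
Proof.
move=> nz_a vw /first_nz_SomeP[Qa_w Qa_lt]; apply first_nz_SomeP.
split=> [|s sw]; rewrite frac_mul_polypart_mul_next //.
  rewrite oppr_eq0 big_ord_recr /= big1 ?add0r => [|i _]; last first.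
    by rewrite Qa_lt ?mul0r //; have := ltn_ord i; lia.
  have -> : (w - (frac_ord a).+1 + frac_ord a).+1 = w by lia.
  by rewrite subnn mulf_neq0 ?cf_inv0_neq0.
by rewrite big1 ?oppr0 // => i _; rewrite Qa_lt ?mul0r //; have := ltn_ord i; lia.
Qed.

Lemma size_polypart_mul Q a : nonzero a ->
  (size (polypart_mul Q a) <= size Q - (frac_ord a).+1)%N.
Proof.
case/frac_ordP => _ a_lt; apply/leq_sizeP => n vn; rewrite coef_poly; case: ifP => // _.
by rewrite big1 // => d nd; rewrite a_lt ?mulr0 //; have := ltn_ord d; lia.
Qed.

Definition cf_ord_bounded D a := forall j,
  (forall i, (i <= j)%N -> nonzero (iter i cf_next a)) ->
  (frac_ord (iter j cf_next a) <= D)%N.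

Lemma cf_ord_bounded_next D a : nonzero a ->
  cf_ord_bounded D a -> cf_ord_bounded D (cf_next a).
Proof.
move=> nz_a bD j nz_j; rewrite -iterSr; apply: bD => -[|i] // ij.
by rewrite iterSr; apply: nz_j.
Qed.

Lemma frac_mul_first_nz_le D Q a w : cf_ord_bounded D a ->
  first_nz (frac_mul Q a) = Some w -> (w <= (size Q).-1 + D)%N.
Proof.
have [N] := ubnP (size Q); elim: N Q a w => // N IHN Q a w sQN bD hw.
have [/frac_mul_neq0[nz_a _] _] := proj1 (first_nz_SomeP _ _) hw.
have vD : (frac_ord a <= D)%N by apply: (bD 0%N) => -[|].
have [wv|vw] := leqP w (frac_ord a); first by lia.
have hw' := first_nz_frac_mul_next nz_a vw hw.
have [/frac_mul_neq0[_ sP0] _] := proj1 (first_nz_SomeP _ _) hw'.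
have sP := size_polypart_mul Q nz_a.
have sPN : (size (polypart_mul Q a) < N)%N by lia.
by have := IHN _ _ _ sPN (cf_ord_bounded_next nz_a bD) hw'; lia.
Qed.

End ContinuedFractionStep.

Arguments cf_next {F} a.

Section ContinuedFractionFp.
Variable p : nat.
Implicit Types (a f : nat -> 'F_p) (Q : {poly 'F_p}).

Lemma inv_step_cf a : nonzero a -> inv_step a (cf_quot a) (cf_next a).
Proof.
move=> nz_a; rewrite /inv_step size_cf_quot //; set v := frac_ord a; split=> [n|s].
  have [vn|nv] := ltnP v n.
    rewrite big_pred0 => [|i]; first by rewrite gtn_eqF // (leq_ltn_trans _ vn).
    by apply/negbTE; rewrite -leqNgt; have := ltn_ord i; lia.
  rewrite (@sum_ord_gtn _ (fun d => (cf_quot a)`_d * a (d - n.+1)%N)); last by lia.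
  have -> : (n == 0%N) = (v - n == v)%N by lia.
  rewrite -cf_inv_conv // (_ : v.+2 - n.+1 = (v - n).+1)%N; last by lia.
  apply: eq_bigr => i _; rewrite coef_poly mulrC.
  have := ltn_ord i => iv; rewrite (_ : (n.+1 + i < v.+2)%N); last by lia.
  by rewrite /v; congr (a _ * cf_inv a _); lia.
have := cf_inv_conv (s + v).+1 nz_a; rewrite (_ : ((s + v).+1 == v) = false); last by lia.
rewrite (@sum_ord_split _ (fun i => a i * cf_inv a ((s + v).+1 - i)) (s + v).+2 s v.+2);
  last by lia.
rewrite mulr0n => conv0; apply: (etrans _ conv0); rewrite addrC; congr (_ + _).
  apply: eq_bigr => i _; rewrite /cf_next; congr (_ * cf_inv a _).
  by have := ltn_ord i; lia.
apply: eq_bigr => i _; rewrite coef_poly ltn_ord mulrC addnC; congr (_ * cf_inv a _).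
by have := ltn_ord i; lia.
Qed.

Lemma cf_expansion_iter a :
  cf_expansion a (fun j => iter j cf_next a)
    (fun j => if j is j'.+1 then cf_quot (iter j' cf_next a) else 0).
Proof. by split=> // j; apply: inv_step_cf. Qed.

Lemma deficiency_cf_ord_bounded f D r :
  deficiency_bound f D -> cf_ord_bounded D (fun i => f (i + r)%N).
Proof.
move=> hD j nz_j; have := hD r _ _ (cf_expansion_iter _) j nz_j.
by rewrite /= size_cf_quot //; apply: nz_j.
Qed.

Lemma frac_XrQE f r Q : frac_XrQ f r Q =1 frac_mul Q (fun i => f (i + r)%N).
Proof. by move=> i; apply: eq_bigr => d _; rewrite addnAC. Qed.

Lemma XadicLC_first_nz f r Q : XadicLC_counterexample f -> Q != 0 ->
  exists w, first_nz (frac_mul Q (fun i => f (i + r)%N)) = Some w.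
Proof.
case=> c [c_gt0 hc] Q0; case E: first_nz => [w|]; first by exists w.
have := hc r Q Q0; rewrite /frac_abs (eq_first_nz (frac_XrQE f r Q)) E mulr0.
by rewrite leNgt c_gt0.
Qed.

End ContinuedFractionFp.

Lemma first_nz_coef (R : nzSemiRingType) (P : {poly R}) : P != 0 ->
  exists2 a, first_nz (fun j => P`_j) = Some a & (a < size P)%N.
Proof.
move=> P0; case E: first_nz => [a|]; last first.
  by case/eqP: P0; apply/polyP => i; rewrite coef0; apply: (proj1 (first_nz_NoneP _) E).
exists a => //; have [Pa _] := proj1 (first_nz_SomeP _ _) E.
by rewrite ltnNge; apply: contra Pa => sPa; rewrite nth_default.
Qed.

Lemma first_nz_rev_coef (R : nzSemiRingType) (P : {poly R}) m :
  P != 0 -> (size P <= m)%N ->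
  first_nz (fun j => if (j < m)%N then P`_(m - j.+1) else 0) = Some (m - size P)%N.
Proof.
rewrite -size_poly_gt0 => sP0 sPm; apply first_nz_SomeP; split=> [|j jP].
  rewrite ifT; last by lia.
  have -> : (m - (m - size P).+1 = (size P).-1)%N by lia.
  by rewrite -lead_coefE lead_coef_eq0 -size_poly_gt0.
case: ifP => // _; rewrite nth_default //.
by move: jP sPm; set s := size P; lia.
Qed.

Lemma sum_ord_delta (R : nzSemiRingType) m j (g : nat -> R) :
  \sum_(l < m) ((val l == j) : nat)%:R * g l = if (j < m)%N then g j else 0.
Proof.
rewrite (eq_bigr (fun l : 'I_m => if val l == j then g l else 0)) => [|l _].
  by rewrite -big_mkcond big_ord1_eq.
by case: eqP; rewrite ?mul1r ?mul0r.
Qed.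

Lemma ndigitS p n l : ndigit p n l.+1 = ndigit p (n %/ p) l.
Proof. by rewrite /ndigit expnS divnMA. Qed.

Lemma ndigit_inj p m k n : prime p -> (k < p ^ m)%N -> (n < p ^ m)%N ->
  (forall l, (l < m)%N -> ndigit p k l = ndigit p n l) -> k = n.
Proof.
move=> p_pr; have p_gt0 := prime_gt0 p_pr.
elim: m k n => [|m IHm] k n; first by rewrite expn0 !ltnS !leqn0 => /eqP-> /eqP->.
rewrite expnSr => km nm eq_digits.
have eq_mod : (k %% p = n %% p)%N.
  move: (congr1 (fun z : 'F_p => z : nat) (eq_digits 0%N isT)).
  by rewrite /ndigit !val_Fp_nat // expn0 !divn1 !modn_mod.
have eq_div : (k %/ p = n %/ p)%N.
  by apply: IHm; rewrite ?ltn_divLR // => l lm; rewrite -!ndigitS; apply: eq_digits.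
by rewrite (divn_eq k p) (divn_eq n p) eq_mod eq_div.
Qed.

Definition digit_diff p m k n : {poly 'F_p} :=
  \poly_(l < m) (ndigit p k l - ndigit p n l).

Lemma digit_diff_neq0 p m k n : prime p -> (k < p ^ m)%N -> (n < p ^ m)%N ->
  k != n -> digit_diff p m k n != 0.
Proof.
move=> p_pr km nm; apply: contraNneq => P0; apply/eqP.
apply: (ndigit_inj p_pr km nm) => l lm.
apply/eqP; rewrite -subr_eq0; apply/eqP.
by have := congr1 (fun P : {poly 'F_p} => P`_l) P0; rewrite /= coef_poly lm coef0.
Qed.

Section NetCoordinates.
Variables (p m k n : nat).
Local Notation P := (digit_diff p m k n).

Lemma dsub_net_digits (C : nat -> 'I_m -> 'F_p) j :
  dsub (net_digits C k) (net_digits C n) j = \sum_(l < m) C j l * P`_l.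
Proof.
rewrite /dsub /net_digits -sumrB; apply: eq_bigr => l _.
by rewrite coef_poly ltn_ord mulrBr.
Qed.

Lemma net_diff_I j :
  dsub (net_digits (@Imat p m) k) (net_digits (@Imat p m) n) j.+1 = P`_j.
Proof.
rewrite dsub_net_digits; under eq_bigr => l _ do rewrite /Imat eqSS eq_sym.
rewrite sum_ord_delta; case: ltnP => // mj.
by rewrite nth_default // (leq_trans (size_poly _ _) mj).
Qed.

Lemma net_diff_J j :
  dsub (net_digits (@Jmat p m) k) (net_digits (@Jmat p m) n) j.+1 =
  if (j < m)%N then P`_(m - j.+1) else 0.
Proof.
rewrite dsub_net_digits /Jmat /=; case: ltnP => jm.
  by rewrite sum_ord_delta ifT //; lia.
by rewrite big1 // => l _; rewrite andFb mulr0n mul0r.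
Qed.

Lemma net_diff_H f j :
  dsub (net_digits (@Hmat p m f) k) (net_digits (@Hmat p m f) n) j.+1 = frac_mul P f j.
Proof.
rewrite dsub_net_digits (frac_mul_widen _ _ (size_poly _ _)).
by apply: eq_bigr => l _; rewrite mulrC.
Qed.

End NetCoordinates.

Unset Implicit Arguments. Set Strict Implicit.

Theorem lemma6 (p : nat) (f : nat -> 'F_p) (D : nat) :
  prime p ->
  XadicLC_counterexample f ->
  deficiency_bound f D ->
  forall m : nat, (D < m)%N ->
  forall k n : nat, (k < n)%N -> (n < p ^ m)%N ->
    ((p ^ (m + D + 3))%N%:R)^-1 < net_dist m f k n.
Proof.
move=> p_pr hLC hD m _ k n kn nm.
set P := digit_diff p m k n.
have P0 : P != 0 by apply: digit_diff_neq0; rewrite ?neq_ltn ?kn //; lia.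
have sPm : (size P <= m)%N := size_poly _ _.
have [a ha aP] := first_nz_coef P0.
have [_ P_lt] := proj1 (first_nz_SomeP _ _) ha.
have Q0 : drop_poly a P != 0 by rewrite -size_poly_eq0 size_drop_poly; lia.
have [w hw] := XadicLC_first_nz a hLC Q0.
have := frac_mul_first_nz_le (deficiency_cf_ord_bounded hD) hw.
rewrite size_drop_poly => wD.
rewrite /net_dist /pnorm3 /dmin (eq_first_nz (@net_diff_I p m k n)) ha.
rewrite (eq_first_nz (@net_diff_H p m k n f)) (eq_first_nz (frac_mul_drop f P_lt)) hw.
rewrite (eq_first_nz (@net_diff_J p m k n)) (first_nz_rev_coef P0 sPm) /=.
rewrite ltf_pV2 ?posrE ?ltr0n ?expn_gt0 ?prime_gt0 // ltr_nat ltn_exp2l ?prime_gt1 //.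
by move: aP wD sPm; set s := size P; lia.
Qed.
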